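(* Let $\mathbb F$ be a field, $n\ge1$, and for $X,Y\in\mathbb F^{n\times n}$ define the $5n\times5n$ block matrices (with $n\times n$ blocks) $$J=\begin{bmatrix}0&I_n&0&0&0\\0&0&I_n&0&0\\0&0&0&I_n&0\\0&0&0&0&0\\0&0&0&0&0\end{bmatrix},\qquad K_{XY}=\begin{bmatrix}0&0&X&0&Y\\0&0&0&X&0\\0&0&0&0&0\\0&0&0&0&0\\0&0&0&I_n&0\end{bmatrix}.$$ Then $J$ and $K_{XY}$ are nilpotent and commute, and for all $X,Y,X',Y'\in\mathbb F^{n\times n}$: the pairs $(X,Y)$ and $(X',Y')$ are similar if and only if the pairs $(J,K_{XY})$ and $(J,K_{X'Y'})$ are similar.
   Context: Two pairs $(M,N)$, $(M',N')$ of square matrices of the same size are similar if $(S^{-1}MS,S^{-1}NS)=(M',N')$ for some nonsingular $S$. *)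

From HB Require Import structures.
From mathcomp Require Import all_boot all_order all_algebra.
Set Implicit Arguments. Unset Strict Implicit. Unset Printing Implicit Defensive.
Import GRing.Theory.
Local Open Scope ring_scope.

Definition pair_similar (F : fieldType) (m : nat) (M N M' N' : 'M[F]_m) : Prop :=
  exists2 S : 'M[F]_m, S \in unitmx &
    invmx S *m M *m S = M' /\ invmx S *m N *m S = N'.

Definition mxpow (F : fieldType) (m : nat) (A : 'M[F]_m) (k : nat) : 'M[F]_m :=
  iter k (mulmx A) 1%:M.

Definition nilpotent_mx (F : fieldType) (m : nat) (A : 'M[F]_m) : Prop :=
  exists k, mxpow A k = 0.

(* A (5n)x(5n) matrix given by a 5x5 array of nxn blocks: entry (i,j) lies in
   block (i %/ n, j %/ n) at position (i %% n, j %% n). *)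
Definition block5 (F : fieldType) (n : nat)
  (B : nat -> nat -> 'M[F]_n) : 'M[F]_(5 * n) :=
  \matrix_(i < 5 * n, j < 5 * n)
     match @insub _ (fun k => k < n)%N 'I_n (i %% n)%N,
           @insub _ (fun k => k < n)%N 'I_n (j %% n)%N with
     | Some i', Some j' => B (i %/ n)%N (j %/ n)%N i' j'
     | _, _ => 0   (* unreachable when n > 0, since i %% n < n *)
     end.

Definition Jmx (F : fieldType) (n : nat) : 'M[F]_(5 * n) :=
  block5 (fun a b =>
    if [|| (a == 0) && (b == 1), (a == 1) && (b == 2) | (a == 2) && (b == 3)]%N
    then 1%:M else 0).

Definition Kmx (F : fieldType) (n : nat) (X Y : 'M[F]_n) : 'M[F]_(5 * n) :=
  block5 (fun a b =>
    if ((a == 0) && (b == 2))%N then X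
    else if ((a == 0) && (b == 4))%N then Y
    else if ((a == 1) && (b == 3))%N then X
    else if ((a == 4) && (b == 3))%N then 1%:M
    else 0).

From HB Require Import structures.
From mathcomp Require Import all_boot all_order all_algebra.
From mathcomp Require Import zify.
Set Implicit Arguments. Unset Strict Implicit. Unset Printing Implicit Defensive.
Import GRing.Theory.
Local Open Scope ring_scope.

(* Write P_a, R_a for the injection of, and projection onto, the a-th n x n
   block coordinate, so J = P_0 R_1 + P_1 R_2 + P_2 R_3 and
   K_XY = P_0 X R_2 + P_0 Y R_4 + P_1 X R_3 + P_4 R_3.  A similarity S of
   (X, Y) lifts to the block-diagonal diag(S, ..., S).  Conversely, let T
   commute with J and intertwine K_XY with K_X'Y'.  Commuting with the Jordan
   chain 0 <- 1 <- 2 <- 3 forces the blocks R_a T P_a (a <= 3) to coincide,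
   say with A, and the first block column of T to be P_0 A, so A is
   invertible.  The identity block of K linking blocks 4 and 3 makes
   R_4 T P_4 = A as well, and the blocks X, Y of K then yield X A = A X' and
   Y A = A Y'. *)

Lemma conjmx_eq (F : fieldType) (m : nat) (S M M' : 'M[F]_m) :
  S \in unitmx -> (invmx S *m M *m S = M') <-> (M *m S = S *m M').
Proof.
move=> uS; split=> [<-|MS]; first by rewrite !mulmxA mulmxV // mul1mx.
by rewrite -mulmxA MS mulKmx.
Qed.

Lemma pair_similarP (F : fieldType) (m : nat) (M N M' N' : 'M[F]_m) :
  pair_similar M N M' N' <->
  exists2 S, S \in unitmx & M *m S = S *m M' /\ N *m S = S *m N'.
Proof.
split=> -[S uS [eM eN]]; exists S => //;
  by split; apply/(conjmx_eq _ _ uS).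
Qed.

Section BlockCoordinates.

Variables (F : fieldType) (m n : nat).

Definition block_inj (a : nat) : 'M[F]_(m * n.+1, n.+1) :=
  \matrix_(i, k) (((i %/ n.+1)%N == a) && ((i %% n.+1)%N == k))%:R.

Definition block_proj (a : nat) : 'M[F]_(n.+1, m * n.+1) := (block_inj a)^T.

Definition mod_ord (i : 'I_(m * n.+1)) : 'I_n.+1 :=
  Ordinal (ltn_pmod i (ltn0Sn n)).

Lemma div_block_lt (i : 'I_(m * n.+1)) : (i %/ n.+1 < m)%N.
Proof. by rewrite ltn_divLR // mulnC. Qed.

Lemma block_inj_entry (a : nat) (i : 'I_(m * n.+1)) (k : 'I_n.+1) :
  block_inj a i k = ((i %/ n.+1)%N == a)%:R * (mod_ord i == k)%:R.
Proof. by rewrite mxE -val_eqE /= -mulnb natrM. Qed.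

Lemma mul_block_inj_entry p (a : nat) (M : 'M[F]_(n.+1, p)) i l :
  (block_inj a *m M) i l = ((i %/ n.+1)%N == a)%:R * M (mod_ord i) l.
Proof.
rewrite mxE (bigD1 (mod_ord i)) //= block_inj_entry eqxx mulr1 big1 ?addr0 //.
move=> k /negbTE nik.
by rewrite block_inj_entry [mod_ord i == k]eq_sym nik mulr0 mul0r.
Qed.

Lemma mul_block_proj_entry p (b : nat) (M : 'M[F]_(p, n.+1)) l j :
  (M *m block_proj b) l j = ((j %/ n.+1)%N == b)%:R * M l (mod_ord j).
Proof.
have -> : M *m block_proj b = (block_inj b *m M^T)^T by rewrite trmx_mul trmxK.
by rewrite mxE mul_block_inj_entry mxE.
Qed.

Lemma block_entry (a b : nat) (M : 'M[F]_n.+1) i j :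
  (block_inj a *m M *m block_proj b) i j =
  ((i %/ n.+1)%N == a)%:R * ((j %/ n.+1)%N == b)%:R * M (mod_ord i) (mod_ord j).
Proof.
by rewrite mul_block_proj_entry mul_block_inj_entry mulrCA mulrA.
Qed.

Lemma block_proj_inj (a b : nat) : (a < m)%N ->
  block_proj a *m block_inj b = if a == b then 1%:M else 0.
Proof.
move=> ltam; apply/matrixP => k l.
have ltim : (a * n.+1 + k < m * n.+1)%N by have := ltn_ord k; nia.
rewrite mxE (bigD1 (Ordinal ltim)) //= big1 => [|i ni].
  rewrite !mxE /= divnMDl // divn_small // modnMDl modn_small // addn0 !eqxx /=.
  by case: eqVneq; rewrite ?mxE ?mul1r ?addr0.
rewrite !mxE; case: (boolP (_ && _)) => [/andP[/eqP ia /eqP ik]|_].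
  by move: ni; rewrite -val_eqE /= {1}(divn_eq i n.+1) ia ik mulnC eqxx.
by rewrite mul0r.
Qed.

Lemma mulmx_block_proj_inj p (a b : nat) (M : 'M[F]_(p, n.+1)) : (a < m)%N ->
  M *m block_proj a *m block_inj b = if a == b then M else 0.
Proof.
by move=> ltam; rewrite -mulmxA block_proj_inj //; case: eqP; rewrite ?mulmx1 ?mulmx0.
Qed.

Lemma sum_block_inj_proj : \sum_(a < m) block_inj a *m block_proj a = 1%:M.
Proof.
apply/matrixP => i j; rewrite summxE.
rewrite (bigD1 (Ordinal (div_block_lt i))) //= big1 => [|a nia].
  rewrite addr0 -[block_inj _]mulmx1 block_entry eqxx mul1r !mxE.
  rewrite -natrM mulnb eq_sym; congr (nat_of_bool _)%:R.
  apply/idP/idP => [/andP[/eqP ij /eqP mij]|/eqP-> ]; last by rewrite !eqxx.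
  have /= mij' := congr1 val mij.
  by rewrite -val_eqE /= (divn_eq i n.+1) (divn_eq j n.+1) ij mij'.
rewrite -[block_inj _]mulmx1 block_entry.
by move: nia; rewrite -val_eqE /= eq_sym => /negbTE ->; rewrite !mul0r.
Qed.

Definition block_diag (S : 'M[F]_n.+1) : 'M[F]_(m * n.+1) :=
  \sum_(a < m) block_inj a *m S *m block_proj a.

Lemma block_diag_inj (S : 'M[F]_n.+1) (b : nat) : (b < m)%N ->
  block_diag S *m block_inj b = block_inj b *m S.
Proof.
move=> ltbm; rewrite mulmx_suml (bigD1 (Ordinal ltbm)) //= big1 => [|a nab].
  by rewrite -mulmxA block_proj_inj // eqxx mulmx1 addr0.
by rewrite mulmx_block_proj_inj // (negbTE (nab : a != b :> nat)).
Qed.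

Lemma block_proj_diag (S : 'M[F]_n.+1) (b : nat) : (b < m)%N ->
  block_proj b *m block_diag S = S *m block_proj b.
Proof.
move=> ltbm; rewrite mulmx_sumr (bigD1 (Ordinal ltbm)) //= big1 => [|a nab].
  by rewrite !mulmxA block_proj_inj // eqxx mul1mx addr0.
by rewrite !mulmxA block_proj_inj // eq_sym (negbTE (nab : a != b :> nat)) !mul0mx.
Qed.

Lemma block_diag_mul (S S' : 'M[F]_n.+1) :
  block_diag S *m block_diag S' = block_diag (S *m S').
Proof.
rewrite [block_diag S]/block_diag mulmx_suml; apply: eq_bigr => a _.
by rewrite -mulmxA block_proj_diag // !mulmxA.
Qed.

Lemma block_diag1 : block_diag 1%:M = 1%:M.
Proof.
by rewrite -sum_block_inj_proj; apply: eq_bigr => a _; rewrite mulmx1.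
Qed.

Lemma block_diag_unit (S : 'M[F]_n.+1) : S \in unitmx -> block_diag S \in unitmx.
Proof.
move=> uS; have := block_diag_mul S (invmx S).
by rewrite mulmxV // block_diag1 => /mulmx1_unit[].
Qed.

End BlockCoordinates.

Arguments block_inj {F m n} a.
Arguments block_proj {F m n} a.
Arguments block_diag {F m n} S.

Section FiveBlocks.

Variables (F : fieldType) (n : nat).

Local Notation P := (@block_inj F 5 n).
Local Notation R := (@block_proj F 5 n).
Local Notation J := (Jmx F n.+1).
Local Notation K := (@Kmx F n.+1).

Lemma block5E (B : nat -> nat -> 'M[F]_n.+1) i j :
  block5 B i j = B (i %/ n.+1)%N (j %/ n.+1)%N (mod_ord i) (mod_ord j).
Proof.
rewrite mxE; case: insubP => [i' _ vi|]; last by rewrite ltn_pmod.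
case: insubP => [j' _ vj|]; last by rewrite ltn_pmod.
by congr (B _ _ _ _); apply: val_inj.
Qed.

Lemma Jmx_blocks : J = P 0 *m R 1 + P 1 *m R 2 + P 2 *m R 3.
Proof.
apply/matrixP => i j; rewrite block5E ![fun_of_matrix (_ + _) _ _]mxE.
rewrite !mul_block_proj_entry !block_inj_entry.
move: (i %/ n.+1)%N (j %/ n.+1)%N (div_block_lt i) => a b.
by case: a => [|[|[|[|[|?]]]]] // _; case: b => [|[|[|[|[|?]]]]];
  rewrite /= ?mxE ?mul1r ?mul0r ?mulr0 ?addr0 ?add0r.
Qed.

Lemma Kmx_blocks (X Y : 'M[F]_n.+1) :
  K X Y = P 0 *m X *m R 2 + P 0 *m Y *m R 4 + P 1 *m X *m R 3 + P 4 *m R 3.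
Proof.
apply/matrixP => i j; rewrite block5E ![fun_of_matrix (_ + _) _ _]mxE !block_entry.
rewrite !mul_block_proj_entry !block_inj_entry.
move: (i %/ n.+1)%N (j %/ n.+1)%N (div_block_lt i) => a b.
by case: a => [|[|[|[|[|?]]]]] // _; case: b => [|[|[|[|[|?]]]]];
  rewrite /= ?mxE ?mul1r ?mul0r ?mulr0 ?addr0 ?add0r.
Qed.

Ltac block_simp :=
  rewrite ?mulmxDl ?mulmxDr ?mulmxA ?mulmx_block_proj_inj ?block_proj_inj //=
    ?mulmx1 ?mul1mx ?mulmx0 ?mul0mx ?addr0 ?add0r.

Lemma Jmx_Kmx_commute (X Y : 'M[F]_n.+1) : J *m K X Y = K X Y *m J.
Proof. by rewrite Jmx_blocks Kmx_blocks; block_simp. Qed.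

Lemma Jmx_sqr : J *m J = P 0 *m R 2 + P 1 *m R 3.
Proof. by rewrite Jmx_blocks; block_simp. Qed.

Lemma Jmx_nilpotent : mxpow J 4 = 0.
Proof. by rewrite /mxpow /= mulmx1 !mulmxA Jmx_sqr -mulmxA Jmx_sqr; block_simp. Qed.

Lemma Kmx_sqr (X Y : 'M[F]_n.+1) : K X Y *m K X Y = P 0 *m Y *m R 3.
Proof. by rewrite Kmx_blocks; block_simp. Qed.

Lemma Kmx_nilpotent (X Y : 'M[F]_n.+1) : mxpow (K X Y) 3 = 0.
Proof. by rewrite /mxpow /= mulmx1 Kmx_sqr Kmx_blocks; block_simp. Qed.

Lemma Jmx_inj (a : nat) : J *m P a = if (0 < a < 4)%N then P a.-1 else 0.
Proof. by rewrite Jmx_blocks; block_simp; case: a => [|[|[|[|a]]]]; block_simp. Qed.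

Lemma proj_Jmx (a : nat) : (a < 5)%N -> R a *m J = if (a < 3)%N then R a.+1 else 0.
Proof.
move=> lta5; rewrite Jmx_blocks; block_simp.
by case: a lta5 => [|[|[|[|[|a]]]]]; block_simp.
Qed.

Lemma Jmx_block_diag (S : 'M[F]_n.+1) : J *m block_diag S = block_diag S *m J.
Proof.
rewrite Jmx_blocks !mulmxDl !mulmxDr -!mulmxA !block_proj_diag //.
by rewrite !mulmxA !block_diag_inj.
Qed.

Lemma Kmx_block_diag (X Y X' Y' S : 'M[F]_n.+1) :
  X *m S = S *m X' -> Y *m S = S *m Y' ->
  K X Y *m block_diag S = block_diag S *m K X' Y'.
Proof.
move=> XS YS; rewrite !Kmx_blocks !mulmxDl !mulmxDr -!mulmxA !block_proj_diag //.
by rewrite !(mulmxA X) !(mulmxA Y) XS YS !mulmxA !block_diag_inj.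
Qed.

Section Intertwiner.

Variables (X Y X' Y' : 'M[F]_n.+1) (T : 'M[F]_(5 * n.+1)).
Hypotheses (JT : J *m T = T *m J) (KT : K X Y *m T = T *m K X' Y').

Lemma proj_Jmx_commute a b : R a *m J *m T *m P b = R a *m T *m (J *m P b).
Proof. by rewrite -(mulmxA _ J) JT !mulmxA. Qed.

Lemma diag_block_shift a : (a < 3)%N -> R a.+1 *m T *m P a.+1 = R a *m T *m P a.
Proof.
move=> lta3; have lta5 : (a < 5)%N by lia.
have := proj_Jmx_commute a a.+1.
by rewrite proj_Jmx // lta3 Jmx_inj -[(a.+1 < 4)%N]/(a < 3)%N lta3.
Qed.

Lemma last_row_block b : (b < 3)%N -> R 4 *m T *m P b = 0.
Proof.
move=> ltb3; have := proj_Jmx_commute 4 b.+1.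
by rewrite proj_Jmx // Jmx_inj -[(b.+1 < 4)%N]/(b < 3)%N ltb3 /= !mul0mx.
Qed.

Lemma ker_block a b : (0 < a < 4)%N -> J *m P b = 0 -> R a *m T *m P b = 0.
Proof.
case: a => // a /andP[_ lta3] JPb; have := proj_Jmx_commute a b.
have lta5 : (a < 5)%N by lia.
by rewrite JPb mulmx0 proj_Jmx // (lta3 : (a < 3)%N).
Qed.

Lemma first_col_block_zero a : (0 < a < 5)%N -> R a *m T *m P 0 = 0.
Proof.
case/andP=> a_gt0; rewrite ltnS leq_eqVlt => /orP[/eqP-> | lta4].
  exact: last_row_block.
by apply: ker_block; [rewrite a_gt0 | rewrite Jmx_inj].
Qed.

Lemma first_col_block : T *m P 0 = P 0 *m (R 0 *m T *m P 0).
Proof.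
rewrite -[T *m P 0]mul1mx -(sum_block_inj_proj F 5 n) mulmx_suml (bigD1 ord0) //=.
rewrite big1 ?addr0 ?mulmxA // => a a_neq0.
rewrite -mulmxA (mulmxA (R a)) first_col_block_zero ?mulmx0 //.
by rewrite lt0n ltn_ord andbT; move: a_neq0; rewrite -val_eqE.
Qed.

Lemma last_diag_block : R 4 *m T *m P 4 = R 0 *m T *m P 0.
Proof.
have R4K : R 4 *m K X Y = R 3 by rewrite Kmx_blocks; block_simp.
have KP3 : K X' Y' *m P 3 = P 1 *m X' + P 4 by rewrite Kmx_blocks; block_simp.
have := congr1 (fun M => R 4 *m M *m P 3) KT.
rewrite !mulmxA R4K -(mulmxA (R 4 *m T)) KP3 mulmxDr !mulmxA.
rewrite last_row_block // mul0mx add0r.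
by move <-; rewrite !diag_block_shift.
Qed.

Lemma corner_intertwines : let A := R 0 *m T *m P 0 in
  X *m A = A *m X' /\ Y *m A = A *m Y'.
Proof.
have R0K : R 0 *m K X Y = X *m R 2 + Y *m R 4 by rewrite Kmx_blocks; block_simp.
have KP2 : K X' Y' *m P 2 = P 0 *m X' by rewrite Kmx_blocks; block_simp.
have KP4 : K X' Y' *m P 4 = P 0 *m Y' by rewrite Kmx_blocks; block_simp.
have blockKT b : R 0 *m K X Y *m T *m P b = R 0 *m T *m (K X' Y' *m P b).
  by rewrite -(mulmxA _ (K X Y)) KT !mulmxA.
split.
- have := blockKT 2%N; rewrite R0K KP2 !mulmxDl -!(mulmxA X) -!(mulmxA Y).
  by rewrite !diag_block_shift // last_row_block // mulmx0 addr0 !mulmxA.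
- have := blockKT 4%N; rewrite R0K KP4 !mulmxDl -!(mulmxA X) -!(mulmxA Y).
  by rewrite last_diag_block ker_block ?Jmx_inj // mulmx0 add0r !mulmxA.
Qed.

Lemma corner_unit : T \in unitmx -> R 0 *m T *m P 0 \in unitmx.
Proof.
move=> uT.
suff /mulmx1_unit[] : R 0 *m invmx T *m P 0 *m (R 0 *m T *m P 0) = 1%:M by [].
by rewrite -mulmxA -first_col_block mulmxA mulmxKV // block_proj_inj.
Qed.

End Intertwiner.

Lemma pair_similar_Kmx (X Y X' Y' : 'M[F]_n.+1) :
  pair_similar X Y X' Y' -> pair_similar J (K X Y) J (K X' Y').
Proof.
case/pair_similarP => S uS [XS YS]; apply/pair_similarP.
exists (block_diag S); first exact: block_diag_unit.
by split; [exact: Jmx_block_diag | exact: Kmx_block_diag].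
Qed.

Lemma pair_similar_of_Kmx (X Y X' Y' : 'M[F]_n.+1) :
  pair_similar J (K X Y) J (K X' Y') -> pair_similar X Y X' Y'.
Proof.
case/pair_similarP => T uT [JT KT]; apply/pair_similarP.
have [XA YA] := corner_intertwines JT KT.
by exists (R 0 *m T *m P 0); [exact: corner_unit | split].
Qed.

End FiveBlocks.

Theorem mainTheorem3 (F : fieldType) (n : nat) (hn : (1 <= n)%N) :
  nilpotent_mx (Jmx F n) /\
  (forall X Y : 'M[F]_n,
     nilpotent_mx (Kmx X Y) /\ Jmx F n *m Kmx X Y = Kmx X Y *m Jmx F n) /\
  (forall X Y X' Y' : 'M[F]_n,
     pair_similar X Y X' Y' <->
     pair_similar (Jmx F n) (Kmx X Y) (Jmx F n) (Kmx X' Y')).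
Proof.
case: n hn => // n _.
split; first by exists 4%N; exact: Jmx_nilpotent.
split=> [X Y | X Y X' Y'].
  by split; [exists 3%N; exact: Kmx_nilpotent | exact: Jmx_Kmx_commute].
by split; [exact: pair_similar_Kmx | exact: pair_similar_of_Kmx].
Qed.
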